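(* Let $a,b,c,k,m>0$ and consider the system $$\frac{dx}{dt}=bx(1-x-cy),\qquad \frac{dy}{dt}=y\Big(\frac{1}{1+kx}-y-ax-mxy\Big)$$ with $x(0)>0$, $y(0)>0$. Then the solutions are bounded; in fact $\limsup_{t\to+\infty}x(t)\le 1$ and $\limsup_{t\to+\infty}y(t)\le 1$.
   Context: All parameters $a,b,c,k,m$ are positive constants. *)

From Stdlib Require Import Reals.
From Coquelicot Require Import Coquelicot.
Open Scope R_scope.

Definition is_solution (a b c k m : R) (x y : R -> R) : Prop :=
  (forall t, 0 < t ->
     derivable_pt_lim x t (b * x t * (1 - x t - c * y t)) /\
     derivable_pt_lim y t (y t * (/ (1 + k * x t) - y t - a * x t - m * x t * y t))) /\
  filterlim x (at_right 0) (locally (x 0)) /\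
  filterlim y (at_right 0) (locally (y 0)).

Definition limsup_le (f : R -> R) (L : R) : Prop :=
  forall eps, 0 < eps -> exists T, forall t, T <= t -> f t <= L + eps.

From Stdlib Require Import Reals Lra Psatz Classical.
From Coquelicot Require Import Coquelicot.
Open Scope R_scope.

(* Each equation has the form [u' = u * h] with [h] continuous on [(0, +oo)], and
   then [u ^ 2 * exp (2 K t)] is nondecreasing wherever [h >= -K], so [x] and [y]
   never reach [0]. For positive [x, y] the coupling terms only slow growth:
   [x' <= b x (1 - x)] and, since [1 / (1 + k x) <= 1], [y' <= y (1 - y)]. A positive
   [u] with [u' <= beta u (1 - u)] cannot cross a level [L >= 1] upwards, so it stays
   below [u 0 + 1]; and while [u > 1 + eps] it decreases at rate at least
   [beta * eps], so it drops below [1 + eps] in finite time and remains there. *)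

Lemma derivable_pt_lim_continuous f t l : derivable_pt_lim f t l -> continuous f t.
Proof.
  intros Hd. apply (ex_derive_continuous (K := R_AbsRing) (V := R_NormedModule)).
  exists l. now apply is_derive_Reals.
Qed.

Lemma continuous_bounded_below_segment g t0 t1 :
  (forall t, t0 <= t <= t1 -> continuous g t) ->
  exists K, forall t, t0 <= t <= t1 -> - K <= g t.
Proof.
  intros Hg. destruct (Rle_dec t0 t1) as [Ht | Ht].
  - destruct (continuity_ab_min g t0 t1 Ht) as [tmin [Hmin _]].
    + intros t Ht'; now apply continuity_pt_filterlim, Hg.
    + exists (- g tmin). intros t Ht'. rewrite Ropp_involutive. exact (Hmin t Ht').
  - exists 0. intros t Ht'. lra.
Qed.

Lemma at_right_0_close f : filterlim f (at_right 0) (locally (f 0)) ->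
  forall e, 0 < e -> exists d, 0 < d /\ forall t, 0 < t < d -> Rabs (f t - f 0) < e.
Proof.
  intros Hf e He.
  destruct (proj1 (filterlim_locally f (f 0)) Hf (mkposreal e He)) as [d Hd].
  exists d. split; [apply cond_pos |]. intros t Ht. apply Hd; [| lra].
  change (Rabs (t - 0) < d). rewrite Rminus_0_r, Rabs_pos_eq; lra.
Qed.

Definition pos_part_sq (u : R) := (Rmax u 0) ^ 2.

Lemma pos_part_sq_taylor u v :
  Rabs (pos_part_sq v - pos_part_sq u - 2 * Rmax u 0 * (v - u)) <= (v - u) ^ 2.
Proof.
  unfold pos_part_sq, Rmax.
  pose proof (pow2_ge_0 (v - u)).
  destruct (Rle_dec u 0) as [? | ?%Rnot_le_lt], (Rle_dec v 0) as [? | ?%Rnot_le_lt];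
    apply Rabs_le; split; nra.
Qed.

Lemma derivable_pt_lim_pos_part_sq u : derivable_pt_lim pos_part_sq u (2 * Rmax u 0).
Proof.
  intros eps Heps. exists (mkposreal eps Heps). intros h Hh0 Hh; simpl in Hh.
  pose proof (pos_part_sq_taylor u (u + h)) as Ht.
  replace (u + h - u) with h in Ht by ring.
  replace ((pos_part_sq (u + h) - pos_part_sq u) / h - 2 * Rmax u 0)
    with ((pos_part_sq (u + h) - pos_part_sq u - 2 * Rmax u 0 * h) / h) by (field; auto).
  assert (Hh_pos : 0 < Rabs h) by (apply Rabs_pos_lt; auto).
  assert (Hh_sq : h ^ 2 = Rabs h * Rabs h) by (rewrite <- Rabs_mult, Rabs_pos_eq; nra).
  unfold Rdiv. rewrite Rabs_mult, Rabs_inv.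
  apply (Rmult_lt_reg_r (Rabs h)); [exact Hh_pos |].
  rewrite Rmult_assoc, Rinv_l by lra. nra.
Qed.

(* The squared excess [max (f - L) 0 ^ 2] vanishes at [t0] and is nonincreasing. *)
Lemma stays_below_barrier f d t0 L :
  (forall t, t0 <= t -> derivable_pt_lim f t (d t)) ->
  (forall t, t0 <= t -> L < f t -> d t <= 0) ->
  f t0 <= L -> forall t, t0 <= t -> f t <= L.
Proof.
  intros Hd Hdown H0 t Ht.
  destruct (Req_dec t t0) as [-> | Hne]; [exact H0 |].
  set (G := fun s => pos_part_sq (f s - L)).
  assert (HG : forall s, t0 <= s <= t ->
            derivable_pt_lim G s (2 * Rmax (f s - L) 0 * (d s - 0))).
  { intros s Hs. apply (derivable_pt_lim_comp (fun s => f s - L) pos_part_sq).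
    - apply derivable_pt_lim_minus; [apply Hd; lra | apply derivable_pt_lim_const].
    - apply derivable_pt_lim_pos_part_sq. }
  destruct (MVT_cor2 G _ t0 t ltac:(lra) HG) as [s [Hmvt Hs]].
  assert (Hslope : 2 * Rmax (f s - L) 0 * (d s - 0) <= 0).
  { unfold Rmax; destruct (Rle_dec (f s - L) 0); [nra |].
    assert (d s <= 0) by (apply Hdown; lra). nra. }
  assert (HG0 : G t0 = 0)
    by (unfold G, pos_part_sq, Rmax; destruct (Rle_dec (f t0 - L) 0); [ring | lra]).
  assert (HGt : G t <= 0) by nra.
  unfold G, pos_part_sq, Rmax in HGt.
  destruct (Rle_dec (f t - L) 0); [lra | nra].
Qed.

Lemma linear_ode_nonzero f h t0 t1 K : t0 <= t1 ->
  (forall t, t0 <= t <= t1 -> derivable_pt_lim f t (f t * h t)) ->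
  (forall t, t0 <= t <= t1 -> - K <= h t) ->
  f t0 <> 0 -> f t1 <> 0.
Proof.
  intros Ht Hd Hh H0.
  destruct (Req_dec t0 t1) as [<- | Hne]; [exact H0 |].
  set (F := fun s => f s ^ 2 * exp (2 * K * (s - t0))).
  set (F' := fun s => 2 * (f s ^ 2 * exp (2 * K * (s - t0))) * (h s + K)).
  assert (HF : forall s, t0 <= s <= t1 -> derivable_pt_lim F s (F' s)).
  { intros s Hs. apply is_derive_Reals.
    assert (Df : is_derive f s (f s * h s)) by (apply is_derive_Reals, Hd; exact Hs).
    unfold F, F'. auto_derive.
    - exists (f s * h s). exact Df.
    - replace (Derive (fun u => f u) s) with (f s * h s)
        by (symmetry; now apply is_derive_unique).
      unfold Rminus; ring. }
  destruct (MVT_cor2 F F' t0 t1 ltac:(lra) HF) as [s [Hmvt Hs]].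
  assert (0 <= F' s).
  { unfold F'. pose proof (exp_pos (2 * K * (s - t0))). pose proof (Hh s ltac:(lra)).
    assert (0 <= f s ^ 2) by apply pow2_ge_0.
    apply Rmult_le_pos; [nra | lra]. }
  assert (HF0 : F t0 = f t0 ^ 2) by (unfold F; rewrite Rminus_diag, Rmult_0_r, exp_0; ring).
  assert (0 < f t0 ^ 2) by (rewrite <- Rsqr_pow2; now apply Rlt_0_sqr).
  assert (0 <= F' s * (t1 - t0)) by (apply Rmult_le_pos; lra).
  assert (HF1 : 0 < F t1) by lra.
  unfold F in HF1. intros E. rewrite E in HF1. lra.
Qed.

Lemma linear_ode_pos f h t0 t1 : t0 <= t1 ->
  (forall t, t0 <= t <= t1 -> derivable_pt_lim f t (f t * h t)) ->
  (forall t, t0 <= t <= t1 -> continuous h t) ->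
  0 < f t0 -> 0 < f t1.
Proof.
  intros Ht Hd Hh H0.
  destruct (continuous_bounded_below_segment h t0 t1 Hh) as [K HK].
  assert (Hnz : forall t, t0 <= t <= t1 -> f t <> 0).
  { intros t Ht'. apply (linear_ode_nonzero f h t0 t K); try lra.
    - intros s Hs. apply Hd. lra.
    - intros s Hs. apply HK. lra. }
  destruct (Rlt_le_dec 0 (f t1)) as [| Hle]; [assumption | exfalso].
  assert (Hlt : f t1 < 0) by (pose proof (Hnz t1 ltac:(lra)); lra).
  assert (Ht01 : t0 < t1) by (destruct Ht as [| <-]; lra).
  destruct (Ranalysis5.IVT_interv (fun s => - f s) t0 t1) as [z [Hz Hfz]];
    [| lra | lra | lra |].
  - intros s Hs. apply continuity_pt_filterlim.
    apply (derivable_pt_lim_continuous (fun u => - f u) s (- (f s * h s))).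
    apply derivable_pt_lim_opp, Hd. exact Hs.
  - apply (Hnz z Hz). lra.
Qed.

Lemma linear_ode_pos_from_0 f h :
  filterlim f (at_right 0) (locally (f 0)) -> 0 < f 0 ->
  (forall t, 0 < t -> derivable_pt_lim f t (f t * h t)) ->
  (forall t, 0 < t -> continuous h t) ->
  forall t, 0 <= t -> 0 < f t.
Proof.
  intros Hf H0 Hd Hh t Ht.
  destruct (at_right_0_close f Hf (f 0 / 2) ltac:(lra)) as [d [Hd0 Hclose]].
  assert (Hnear : forall s, 0 < s < d -> 0 < f s).
  { intros s Hs. specialize (Hclose s Hs). apply Rabs_lt_between in Hclose. lra. }
  destruct (Req_dec t 0) as [-> | Hne]; [exact H0 |].
  destruct (Rlt_le_dec t d); [apply Hnear; lra |].
  apply (linear_ode_pos f h (d / 2) t); try lra.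
  - intros s Hs. apply Hd. lra.
  - intros s Hs. apply Hh. lra.
  - apply Hnear. lra.
Qed.

Section LogisticComparison.

Variables (f d : R -> R) (beta : R).
Hypothesis beta_pos : 0 < beta.
Hypothesis f_right_cont : filterlim f (at_right 0) (locally (f 0)).
Hypothesis f_pos : forall t, 0 <= t -> 0 < f t.
Hypothesis f_deriv : forall t, 0 < t -> derivable_pt_lim f t (d t).
Hypothesis f_logistic : forall t, 0 < t -> d t <= beta * f t * (1 - f t).

Lemma logistic_stays_below t0 L : 0 < t0 -> 1 <= L -> f t0 <= L ->
  forall t, t0 <= t -> f t <= L.
Proof.
  intros Ht0 HL.
  apply (stays_below_barrier f d).
  - intros t Ht. apply f_deriv. lra.
  - intros t Ht Hf. specialize (f_logistic t ltac:(lra)).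
    assert (0 <= beta * f t * (f t - 1)).
    { pose proof (f_pos t ltac:(lra)). apply Rmult_le_pos; [nra | lra]. }
    nra.
Qed.

Lemma logistic_bounded t : 0 <= t -> f t <= f 0 + 1.
Proof.
  intros Ht.
  destruct (at_right_0_close f f_right_cont 1 Rlt_0_1) as [e [He Hclose]].
  assert (Hnear : forall s, 0 < s < e -> f s <= f 0 + 1).
  { intros s Hs. specialize (Hclose s Hs). apply Rabs_lt_between in Hclose. lra. }
  destruct (Req_dec t 0) as [-> | Hne]; [lra |].
  destruct (Rlt_le_dec t e); [apply Hnear; lra |].
  pose proof (f_pos 0 (Rle_refl 0)).
  apply (logistic_stays_below (e / 2)); try lra.
  apply Hnear. lra.
Qed.

(* While [f > 1 + eps], [f] decreases at rate at least [beta * eps]; starting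
   below [f 0 + 1] it would become negative within time [(f 0 + 1) / (beta eps)]. *)
Lemma logistic_enters_below eps : 0 < eps -> exists T, 0 < T /\ f T <= 1 + eps.
Proof.
  intros Heps. apply NNPP. intros Hno.
  assert (Habove : forall t, 0 < t -> 1 + eps < f t).
  { intros t Ht. apply Rnot_le_lt. intros Hle. apply Hno. now exists t. }
  set (D := (f 0 + 1) / (beta * eps)).
  pose proof (f_pos 0 (Rle_refl 0)).
  assert (HD : 0 < D) by (apply Rdiv_lt_0_compat; nra).
  assert (HDe : beta * eps * D = f 0 + 1) by (unfold D; field; lra).
  destruct (MVT_cor2 f d 1 (1 + D) ltac:(lra)) as [s [Hmvt Hs]].
  { intros s Hs. apply f_deriv. lra. }
  assert (Hds : d s <= - (beta * eps)).
  { pose proof (Habove s ltac:(lra)). pose proof (f_logistic s ltac:(lra)).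
    assert (0 <= beta * ((f s - 1 - eps) * f s + eps * (f s - 1)))
      by (apply Rmult_le_pos; nra).
    nra. }
  pose proof (logistic_bounded 1 ltac:(lra)).
  pose proof (f_pos (1 + D) ltac:(lra)).
  replace (1 + D - 1) with D in Hmvt by ring.
  nra.
Qed.

Lemma logistic_limsup : limsup_le f 1.
Proof.
  intros eps Heps.
  destruct (logistic_enters_below eps Heps) as [T [HT HfT]].
  exists T. apply logistic_stays_below; lra.
Qed.

End LogisticComparison.

Section Solution.

Variables (a b c k m : R) (x y : R -> R).
Hypotheses (a_ge0 : 0 <= a) (b_pos : 0 < b) (c_ge0 : 0 <= c) (k_ge0 : 0 <= k)
  (m_ge0 : 0 <= m).
Hypothesis sol : is_solution a b c k m x y.
Hypotheses (x0_pos : 0 < x 0) (y0_pos : 0 < y 0).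

Let x_rate t := b * x t * (1 - x t - c * y t).
Let y_rate t := y t * (/ (1 + k * x t) - y t - a * x t - m * x t * y t).

Lemma solution_x_deriv t : 0 < t -> derivable_pt_lim x t (x_rate t).
Proof. intros Ht. exact (proj1 (proj1 sol t Ht)). Qed.

Lemma solution_y_deriv t : 0 < t -> derivable_pt_lim y t (y_rate t).
Proof. intros Ht. exact (proj2 (proj1 sol t Ht)). Qed.

Lemma solution_x_right_cont : filterlim x (at_right 0) (locally (x 0)).
Proof. exact (proj1 (proj2 sol)). Qed.

Lemma solution_y_right_cont : filterlim y (at_right 0) (locally (y 0)).
Proof. exact (proj2 (proj2 sol)). Qed.

Lemma solution_x_pos t : 0 <= t -> 0 < x t.
Proof.
  apply (linear_ode_pos_from_0 x (fun s => b * (1 - x s - c * y s)));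
    [exact solution_x_right_cont | exact x0_pos | |].
  - intros s Hs. replace (x s * (b * (1 - x s - c * y s))) with (x_rate s)
      by (unfold x_rate; ring).
    now apply solution_x_deriv.
  - intros s Hs.
    pose proof (derivable_pt_lim_continuous x s _ (solution_x_deriv s Hs)) as Cx.
    pose proof (derivable_pt_lim_continuous y s _ (solution_y_deriv s Hs)) as Cy.
    apply (continuous_mult (fun _ => b)); [apply continuous_const |].
    apply (continuous_minus (fun s => 1 - x s)).
    + apply (continuous_minus (fun _ => 1)); [apply continuous_const | exact Cx].
    + apply (continuous_mult (fun _ => c)); [apply continuous_const | exact Cy].
Qed.

Lemma solution_y_pos t : 0 <= t -> 0 < y t.
Proof.
  apply (linear_ode_pos_from_0 y (fun s => / (1 + k * x s) - y s - a * x s - m * x s * y s));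
    [exact solution_y_right_cont | exact y0_pos | exact solution_y_deriv |].
  intros s Hs.
  pose proof (derivable_pt_lim_continuous x s _ (solution_x_deriv s Hs)) as Cx.
  pose proof (derivable_pt_lim_continuous y s _ (solution_y_deriv s Hs)) as Cy.
  pose proof (solution_x_pos s ltac:(lra)).
  repeat apply (continuous_minus (V := R_NormedModule)).
  - apply continuous_Rinv_comp; [| nra].
    apply (continuous_plus (V := R_NormedModule) (fun _ => 1)); [apply continuous_const |].
    apply (continuous_mult (fun _ => k)); [apply continuous_const | exact Cx].
  - exact Cy.
  - apply (continuous_mult (fun _ => a)); [apply continuous_const | exact Cx].
  - apply (continuous_mult (fun s => m * x s)); [| exact Cy].
    apply (continuous_mult (fun _ => m)); [apply continuous_const | exact Cx].
Qed.

Lemma solution_x_logistic t : 0 < t -> x_rate t <= b * x t * (1 - x t).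
Proof.
  intros Ht. unfold x_rate.
  pose proof (solution_x_pos t ltac:(lra)). pose proof (solution_y_pos t ltac:(lra)).
  assert (0 <= b * x t * (c * y t)) by (apply Rmult_le_pos; nra).
  nra.
Qed.

Lemma solution_y_logistic t : 0 < t -> y_rate t <= 1 * y t * (1 - y t).
Proof.
  intros Ht. unfold y_rate.
  pose proof (solution_x_pos t ltac:(lra)). pose proof (solution_y_pos t ltac:(lra)).
  assert (/ (1 + k * x t) <= 1) by (rewrite <- Rinv_1; apply Rinv_le_contravar; nra).
  assert (0 <= y t * (1 - / (1 + k * x t) + a * x t + m * x t * y t)).
  { apply Rmult_le_pos; [lra |].
    assert (0 <= m * x t * y t) by (apply Rmult_le_pos; nra).
    nra. }
  nra.
Qed.

Lemma solution_bounded :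
  exists M, forall t, 0 <= t -> Rabs (x t) <= M /\ Rabs (y t) <= M.
Proof.
  exists (Rmax (x 0 + 1) (y 0 + 1)). intros t Ht.
  rewrite (Rabs_pos_eq (x t)), (Rabs_pos_eq (y t))
    by (apply Rlt_le; auto using solution_x_pos, solution_y_pos).
  split; eapply Rle_trans; [| apply Rmax_l | | apply Rmax_r].
  - apply (logistic_bounded x x_rate b);
      auto using solution_x_right_cont, solution_x_pos, solution_x_deriv, solution_x_logistic.
  - apply (logistic_bounded y y_rate 1);
      auto using Rlt_0_1, solution_y_right_cont, solution_y_pos, solution_y_deriv,
        solution_y_logistic.
Qed.

Lemma solution_x_limsup : limsup_le x 1.
Proof.
  apply (logistic_limsup x x_rate b);
    auto using solution_x_right_cont, solution_x_pos, solution_x_deriv, solution_x_logistic.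
Qed.

Lemma solution_y_limsup : limsup_le y 1.
Proof.
  apply (logistic_limsup y y_rate 1);
    auto using Rlt_0_1, solution_y_right_cont, solution_y_pos, solution_y_deriv,
      solution_y_logistic.
Qed.

End Solution.

Theorem theorem2 (a b c k m : R) (x y : R -> R) :
  0 < a -> 0 < b -> 0 < c -> 0 < k -> 0 < m ->
  is_solution a b c k m x y ->
  0 < x 0 -> 0 < y 0 ->
  (exists M, forall t, 0 <= t -> Rabs (x t) <= M /\ Rabs (y t) <= M) /\
  limsup_le x 1 /\ limsup_le y 1.
Proof.
  intros Ha Hb Hc Hk Hm Hsol Hx0 Hy0.
  split; [| split].
  - apply (solution_bounded a b c k m); auto; lra.
  - apply (solution_x_limsup a b c k m x y); auto; lra.
  - apply (solution_y_limsup a b c k m x y); auto; lra.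
Qed.
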